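(* For every integer $n\ge0$, \[ B_{n+1,n+1}(x)=\frac12\,\frac{(3n+2)!}{n!\,(2n+1)!}\,p_n(x),\qquad A_{n+1,n+1}(x)=-B_{n+1,n+1}(-x). \] For every integer $n\ge1$, with $b_n=2\,(\tfrac n2+1)_n\,\frac{(2n)!}{(3n+1)!}$, \[ b_nB_{n+1,n}(x)=\binom{n+\frac n2}{n}q_n(x)-\binom{n+\frac{n-1}2}{n}p_n(x),\qquad b_nB_{n,n+1}(x)=\binom{n+\frac n2}{n}q_n(x)+\binom{n+\frac{n-1}2}{n}p_n(x), \] and $A_{n+1,n}(x)=B_{n,n+1}(-x)$, $A_{n,n+1}(x)=B_{n+1,n}(-x)$.
   Context: Pochhammer symbol: $(a)_0=1$, $(a)_n=a(a+1)\cdots(a+n-1)$; for real $a$ and integer $n\ge0$, $\binom{n+a}{n}:=\frac{(a+1)_n}{n!}$. Define $p_n(x)=\sum_{k=0}^n\binom nk\binom{n+\frac k2}{n}(-1)^{n-k}x^k$ and $q_n(x)=\sum_{k=0}^n\binom nk\binom{n+\frac{k-1}2}{n}(-1)^{n-k}x^k$. Type I Legendre–Angelesco polynomials: for integers $n,m\ge 0$ with $n+m\ge1$, $(A_{n,m},B_{n,m})$ is the unique pair of polynomials with $\deg A_{n,m}\le n-1$, $\deg B_{n,m}\le m-1$ such that, writing $Q_{n,m}=A_{n,m}\chi_{[-1,0]}+B_{n,m}\chi_{[0,1]}$, one has $\int_{-1}^1 Q_{n,m}(x)x^k\,dx=0$ for $0\le k\le n+m-2$ and $\int_{-1}^1 Q_{n,m}(x)x^{n+m-1}\,dx=1$.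 *)

From HB Require Import structures.
From mathcomp Require Import all_boot all_order all_algebra.
Set Implicit Arguments. Unset Strict Implicit. Unset Printing Implicit Defensive.
Import Order.TTheory GRing.Theory Num.Theory.
Local Open Scope ring_scope.

Section Defs.
Variable R : realFieldType.

Definition poch (a : R) (n : nat) : R := \prod_(i < n) (a + i%:R).

(* generalized binomial  binom(n+a, n) := (a+1)_n / n!  *)
Definition gbinom (n : nat) (a : R) : R := poch (a + 1) n / (n`!)%:R.

Definition pP (n : nat) : {poly R} :=
  \sum_(k < n.+1) (('C(n, k))%:R * gbinom n (k%:R / 2) * (-1) ^+ (n - k)) *: 'X^k.

Definition qP (n : nat) : {poly R} :=
  \sum_(k < n.+1) (('C(n, k))%:R * gbinom n ((k%:R - 1) / 2) * (-1) ^+ (n - k)) *: 'X^k.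

Definition polyint (p : {poly R}) : {poly R} :=
  \poly_(i < (size p).+1) (if i is j.+1 then p`_j / (j.+1)%:R else 0).

Definition pint (p : {poly R}) (a b : R) : R := (polyint p).[b] - (polyint p).[a].

(* int_{-1}^{1} Q(x) x^k dx  with  Q = A on [-1,0], B on [0,1]. *)
Definition momentQ (A B : {poly R}) (k : nat) : R :=
  pint (A * 'X^k) (-1) 0 + pint (B * 'X^k) 0 1.

Definition typeI (n m : nat) (A B : {poly R}) : Prop :=
  [/\ (size A <= n)%N, (size B <= m)%N,
      (forall k : nat, (k.+1 < n + m)%N -> momentQ A B k = 0)
    & momentQ A B (n + m).-1 = 1].

End Defs.

From HB Require Import structures.
From mathcomp Require Import all_boot all_order all_algebra.
From mathcomp Require Import ring lra zify.
Import Order.TTheory GRing.Theory Num.Theory.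
Local Open Scope ring_scope.
Set Implicit Arguments. Unset Strict Implicit. Unset Printing Implicit Defensive.

(* Put Q = A on [-1, 0] and B on [0, 1].  Its k-th moment is
   sum_i (B_i + (-1)^(i+k) A_i) / (i + k + 1), so the even moments are the Cauchy sums
   sum_i u_i / (i + 2j + 1) of u_i = B_i + (-1)^i A_i and the odd ones the Cauchy sums
   sum_i v_i / (i + 2j + 2) of v_i = B_i - (-1)^i A_i.  Cauchy matrices with distinct
   positive nodes are nonsingular; counting equations gives uniqueness of the type I pair
   whenever |n - m| <= 1.
   For existence, i |-> binom(n + (i - e)/2, n) is a polynomial F_e of degree n, and
   sum_i C(n,i) (-1)^i F(i) / (i + a) = n! F(-a) / (a)_(n+1) whenever deg F <= n.  Since
   F_0 vanishes at -2, ..., -2n and F_1 at -1, ..., -(2n-1), the coefficients of p_n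
   annihilate the odd-moment sums and those of q_n the even-moment sums below the top
   one, which is evaluated in closed form.  The type I pairs are then read off u and v. *)

Section LegendreAngelesco.
Variable R : realFieldType.
Implicit Types (A B p q : {poly R}) (a x : R).

Lemma size_polyB_leq p q m :
  (size p <= m)%N -> (size q <= m)%N -> (size (p - q)%R <= m)%N.
Proof. by move=> sp sq; rewrite (leq_trans (size_polyD _ _)) // size_polyN geq_max sp. Qed.

Lemma size_prod_XaddC (I : finType) (P : pred I) (c : I -> R) :
  size (\prod_(i | P i) ('X + (c i)%:P)) = #|P|.+1.
Proof.
rewrite size_prod => [|i _]; last by rewrite -size_poly_eq0 size_XaddC.
under eq_bigr do rewrite size_XaddC.
rewrite sum_nat_const; lia.
Qed.

Lemma size_sub_comp_XaddC p c n : (size p <= n.+1)%N ->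
  (size (p - (p \Po ('X + c%:P)))%R <= n)%N.
Proof.
move=> sp; have spc : size (p \Po ('X + c%:P)) = size p by rewrite size_comp_poly2 ?size_XaddC.
apply/leq_sizeP => i; rewrite leq_eqVlt coefB => /orP[/eqP <-|lt_ni]; last first.
  by rewrite !nth_default ?subrr ?spc //; apply: leq_trans sp lt_ni.
have [lt_pn|ge_pn] := ltnP (size p) n.+1; first by rewrite !nth_default ?subrr ?spc.
have szp : size p = n.+1 by apply/eqP; rewrite eqn_leq sp.
have := @lead_coef_comp _ p ('X + c%:P); rewrite size_XaddC => /(_ isT).
by rewrite lead_coefXaddC expr1n mulr1 !lead_coefE spc szp => ->; rewrite subrr.
Qed.

Lemma coef_comp_polyXN p i : (p \Po - 'X)`_i = (-1) ^+ i * p`_i.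
Proof.
rewrite coef_comp_poly; under eq_bigr do rewrite -scaleN1r exprZn coefZ coefXn.
have [i_p|p_i] := ltnP i (size p); last first.
  rewrite nth_default // mulr0 big1 // => k _.
  rewrite (_ : (i == k) = false) ?mulr0 //; apply/negbTE.
  by rewrite neq_ltn (leq_trans (ltn_ord k) p_i) orbT.
rewrite (bigD1 (Ordinal i_p)) //= eqxx mulr1 big1 ?addr0; first by rewrite mulrC.
move=> k /eqP k_i; rewrite (_ : (i == k) = false) ?mulr0 //.
by apply/negbTE/eqP => ik; apply: k_i; apply: val_inj.
Qed.

Lemma size_comp_polyXN p : size (p \Po - 'X) = size p.
Proof. by rewrite size_comp_poly2 // size_polyN size_polyX. Qed.

Lemma natr_fact_neq0 m : m`!%:R != 0 :> R.
Proof. by rewrite pnatr_eq0 -lt0n fact_gt0. Qed.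

Lemma poch_gt0 a n : 0 < a -> 0 < poch a n.
Proof.
move=> a0; apply: prodr_gt0 => i _; apply: ltr_wpDr a0; exact: ler0n.
Qed.

Lemma pochS a n : poch a n.+1 = a * poch (a + 1) n.
Proof.
rewrite /poch big_ord_recl addr0; congr (_ * _).
by apply: eq_bigr => i _; rewrite lift0 -addrA nat1r.
Qed.

Lemma pochSr a n : poch a n.+1 = poch a n * (a + n%:R).
Proof. by rewrite /poch big_ord_recr. Qed.

Lemma poch_nat m k : poch m.+1%:R k = (m + k)`!%:R / m`!%:R :> R.
Proof.
elim: k => [|k IHk]; first by rewrite /poch big_ord0 addn0 divff ?natr_fact_neq0.
by rewrite pochSr IHk addnS factS natrM -natrD addSnnS; field; apply: natr_fact_neq0.
Qed.

(** * Moments as Cauchy sums *)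

Lemma coef_polyint p i :
  (polyint p)`_i = if i is j.+1 then p`_j / j.+1%:R else 0.
Proof.
rewrite coef_poly; case: i => [|j] //=; rewrite ltnS; case: leqP => // /leq_sizeP.
by move=> ->; rewrite ?mul0r.
Qed.

Lemma horner_polyint p m x : (size p <= m)%N ->
  (polyint p).[x] = \sum_(j < m) p`_j / j.+1%:R * x ^+ j.+1.
Proof.
move=> sp; rewrite (@horner_coef_wide _ m.+1); last exact: leq_trans (size_poly _ _) _.
by rewrite big_ord_recl coef_polyint mul0r add0r; under eq_bigr do rewrite coef_polyint.
Qed.

Lemma pint_mulXn p k m a b : (size p <= m)%N ->
  pint (p * 'X^k) a b
    = \sum_(i < m) p`_i / (i + k).+1%:R * (b ^+ (i + k).+1 - a ^+ (i + k).+1).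
Proof.
move=> sp; have spk : (size (p * 'X^k)%R <= k + m)%N.
  apply/leq_sizeP => j jk; rewrite coefMXn; case: ltnP => // kj.
  by move/leq_sizeP: sp; apply; lia.
rewrite /pint !(horner_polyint _ spk) -sumrB big_split_ord /= big1 ?add0r.
  by apply: eq_bigr => i _; rewrite coefMXn /= ltnNge leq_addr addKn addnC mulrBr.
by move=> i _; rewrite coefMXn ltn_ord !mul0r subrr.
Qed.

Lemma momentQE A B m k : (size A <= m)%N -> (size B <= m)%N ->
  momentQ A B k = \sum_(i < m) (B`_i + (-1) ^+ (i + k) * A`_i) / (i + k).+1%:R.
Proof.
move=> sA sB; rewrite /momentQ (pint_mulXn _ _ _ sA) (pint_mulXn _ _ _ sB) -big_split /=.
apply: eq_bigr => i _; rewrite expr0n expr1n /= exprS; ring.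
Qed.

Lemma momentQ_even A B m j : (size A <= m)%N -> (size B <= m)%N ->
  momentQ A B (2 * j)%N = \sum_(i < m) (B`_i + (-1) ^+ i * A`_i) / (i%:R + (2 * j%:R + 1)).
Proof.
move=> sA sB; rewrite (momentQE _ sA sB); apply: eq_bigr => i _.
rewrite exprD [(-1) ^+ (2 * j)]exprM sqrrN !expr1n mulr1.
by rewrite -addnS natrD -addn1 natrD natrM.
Qed.

Lemma momentQ_odd A B m j : (size A <= m)%N -> (size B <= m)%N ->
  momentQ A B (2 * j)%N.+1 = \sum_(i < m) (B`_i - (-1) ^+ i * A`_i) / (i%:R + (2 * j%:R + 2)).
Proof.
move=> sA sB; rewrite (momentQE _ sA sB); apply: eq_bigr => i _.
rewrite addnS exprS exprD [(-1) ^+ (2 * j)]exprM sqrrN !expr1n mulr1 mulN1r mulNr.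
by congr (_ / _); rewrite -addn2 !natrD; ring.
Qed.

Lemma momentQB A B A' B' m k :
  (size A <= m)%N -> (size B <= m)%N -> (size A' <= m)%N -> (size B' <= m)%N ->
  momentQ (A - A') (B - B') k = momentQ A B k - momentQ A' B' k.
Proof.
move=> sA sB sA' sB'.
rewrite (momentQE _ (size_polyB_leq sA sA') (size_polyB_leq sB sB')).
rewrite (momentQE _ sA sB) (momentQE _ sA' sB').
by rewrite -sumrB; apply: eq_bigr => i _; rewrite !coefB; ring.
Qed.

(** * Alternating binomial sums *)

(* [fdiff n h] is (-1)^n times the n-th forward difference of [h] at 0. *)
Definition fdiff n (h : nat -> R) : R := \sum_(k < n.+1) 'C(n, k)%:R * (-1) ^+ k * h k.

Lemma eq_fdiff n (f g : nat -> R) : (forall k, (k <= n)%N -> f k = g k) -> fdiff n f = fdiff n g.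
Proof. by move=> fg; apply: eq_bigr => k _; rewrite fg // -ltnS. Qed.

Lemma fdiff_lincomb n (f g : nat -> R) a b :
  fdiff n (fun k => a * f k + b * g k) = a * fdiff n f + b * fdiff n g.
Proof. by rewrite /fdiff !mulr_sumr -big_split /=; apply: eq_bigr => k _; ring. Qed.

Lemma fdiffS n h : fdiff n.+1 h = fdiff n (fun k => h k - h k.+1).
Proof.
pose g k := 'C(n, k)%:R * (-1) ^+ k * h k.
have -> : fdiff n.+1 h
    = \sum_(k < n.+2) g k + \sum_(k < n.+1) 'C(n, k)%:R * (-1) ^+ k.+1 * h k.+1.
  rewrite /fdiff big_ord_recl [\sum_(k < n.+2) g k]big_ord_recl -addrA -big_split /=.
  congr (_ + _); first by rewrite /g !bin0.
  by apply: eq_bigr => k _; rewrite /g binS natrD; ring.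
rewrite big_ord_recr /= {2}/g bin_small // !mul0r addr0 /fdiff -big_split /=.
by apply: eq_bigr => k _; rewrite /g exprS; ring.
Qed.

Lemma fdiff_poly n p : (size p <= n)%N -> fdiff n (fun k => p.[k%:R]) = 0.
Proof.
elim: n p => [|n IHn] p sp.
  by move: sp; rewrite leqn0 size_poly_eq0 => /eqP->; rewrite /fdiff big_ord1 horner0 mulr0.
rewrite fdiffS -(IHn _ (size_sub_comp_XaddC 1 sp)); apply: eq_fdiff => k _.
by rewrite hornerD hornerN horner_comp hornerD hornerX hornerC natr1.
Qed.

Lemma fdiff_inv n a : 0 < a -> fdiff n (fun k => (k%:R + a)^-1) = n`!%:R / poch a n.+1.
Proof.
elim: n a => [|n IHn] a a0.
  by rewrite /fdiff big_ord1 /poch big_ord1 !mul1r add0r addr0.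
rewrite fdiffS.
have -> : fdiff n (fun k => (k%:R + a)^-1 - (k.+1%:R + a)^-1)
    = 1 * fdiff n (fun k => (k%:R + a)^-1) + (-1) * fdiff n (fun k => (k%:R + (a + 1))^-1).
  rewrite -fdiff_lincomb; apply: eq_fdiff => k _.
  by rewrite mul1r mulN1r -natr1 [_ + 1 + a]addrAC -addrA.
have a1 : 0 < a + 1 by rewrite ltr_wpDr.
rewrite !IHn // [poch a n.+2]pochS [poch a n.+1]pochS [poch (a + 1) n.+1]pochSr factS natrM.
have P0 := lt0r_neq0 (poch_gt0 n a1).
rewrite -[in RHS]natr1; field.
by rewrite P0 (lt0r_neq0 a0) (lt0r_neq0 (ltr_wpDr (ler0n _ n) a1)).
Qed.

Lemma fdiff_frac n p a : (size p <= n.+1)%N -> 0 < a ->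
  fdiff n (fun k => p.[k%:R] / (k%:R + a)) = p.[- a] * (n`!%:R / poch a n.+1).
Proof.
move=> sp a0; set q := p %/ ('X - (- a)%:P).
have Ep : p = q * ('X - (- a)%:P) + p.[- a]%:P by rewrite -modp_XsubC -divp_eq.
have sq : (size q <= n)%N by rewrite size_divp ?polyXsubC_eq0 // size_XsubC leq_subLR.
rewrite -(fdiff_inv n a0) -[RHS]add0r -(fdiff_poly sq) -[fdiff n (fun k => q.[_])]mul1r.
rewrite -fdiff_lincomb; apply: eq_fdiff => k _.
have ka : k%:R + a != 0 by rewrite lt0r_neq0 // ltr_wpDl.
by rewrite {1}Ep hornerD hornerM hornerXsubC hornerC opprK; field.
Qed.

(** * Uniqueness *)

(* A Cauchy matrix [1 / (i + t_j)] with distinct positive nodes is nonsingular: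
   clearing denominators turns the system into an interpolation problem for a
   polynomial of size at most [m] with [m] distinct roots. *)
Lemma cauchy_kernel_eq0 m (t u : nat -> R) :
  {in gtn m, forall j, 0 < t j} -> {in gtn m &, injective t} ->
  (forall j, (j < m)%N -> \sum_(i < m) u i / (i%:R + t j) = 0) ->
  forall i, (i < m)%N -> u i = 0.
Proof.
move=> t_gt0 t_inj sum0; pose L i : {poly R} := \prod_(l < m | l != i) ('X + l%:R%:P).
pose P := \sum_(i < m) u i *: L i.
have sP : (size P <= m)%N.
  apply: (leq_trans (size_sum _ _ _)); apply/bigmax_leqP => i _.
  rewrite (leq_trans (size_scale_leq _ _)) // size_prod_XaddC cardC1 card_ord.
  by have := ltn_ord i; lia.
have P_t j : (j < m)%N -> P.[t j] = 0.
  move=> jm; have tj := t_gt0 j jm.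
  rewrite -(mulr0 (\prod_(l < m) (t j + l%:R))) -(sum0 j jm) horner_sum mulr_sumr.
  apply: eq_bigr => i _; rewrite hornerZ horner_prod [in RHS](bigD1 i) //=.
  under eq_bigr do rewrite hornerD hornerX hornerC.
  have ti : i%:R + t j != 0 by rewrite lt0r_neq0 // ltr_wpDl.
  by rewrite [t j + i%:R]addrC; field.
have {sP P_t} P0 : P = 0.
  apply: (@roots_geq_poly_eq0 _ _ (mkseq t m)); last by rewrite size_mkseq.
    by apply/allP => x /mapP[j]; rewrite mem_iota add0n => /andP[_ jm] ->; apply/eqP/P_t.
  by apply/mkseq_uniqP.
move=> i0 i0m; pose k0 := Ordinal i0m.
have Lk0 : (L k0).[- i0%:R] != 0.
  rewrite horner_prod prodf_seq_neq0; apply/allP => l _; apply/implyP => lk0.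
  rewrite hornerD hornerX hornerC addrC subr_eq0 eqr_nat.
  by apply: contra lk0 => /eqP li0; apply/eqP/val_inj.
have := congr1 (horner^~ (- i0%:R)) P0.
rewrite horner0 /P horner_sum (bigD1 k0) //= big1 ?addr0.
  by move/eqP; rewrite hornerZ mulf_eq0 (negPf Lk0) orbF => /eqP.
move=> i ii0; rewrite hornerZ horner_prod (bigD1 k0) /=; last by rewrite eq_sym.
by rewrite hornerD hornerX hornerC addNr mul0r mulr0.
Qed.

Lemma cauchy_kernel_progression_eq0 m c (w : nat -> R) : 0 < c ->
  (forall j, (j < m)%N -> \sum_(i < m) w i / (i%:R + (2 * j%:R + c)) = 0) ->
  forall i, (i < m)%N -> w i = 0.
Proof.
move=> c0; apply: cauchy_kernel_eq0 => [j _ | j1 j2 _ _ /= eq_t].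
  by have := ler0n R j; lra.
by apply/eqP; rewrite -(eqr_nat R); apply/eqP; lra.
Qed.

Lemma momentQ_eq0_poly_eq0 n A B : (size A <= n.+1)%N -> (size B <= n.+1)%N ->
  (forall k, (k <= 2 * n)%N -> momentQ A B k = 0) ->
  [\/ (size A <= n)%N, (size B <= n)%N | momentQ A B (2 * n)%N.+1 = 0] ->
  A = 0 /\ B = 0.
Proof.
move=> sA sB mom0 top.
pose u i := B`_i + (-1) ^+ i * A`_i; pose v i := B`_i - (-1) ^+ i * A`_i.
have u0 : forall i, (i < n.+1)%N -> u i = 0.
  apply: (cauchy_kernel_progression_eq0 ltr01) => j jn.
  by rewrite -(momentQ_even _ sA sB) mom0 //; lia.
have v0 : forall i, (i < n.+1)%N -> v i = 0.
  have v_sum j : (j < n)%N -> \sum_(i < n.+1) v i / (i%:R + (2 * j%:R + 2)) = 0.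
    by move=> jn; rewrite -(momentQ_odd _ sA sB) mom0 //; lia.
  have vn0 : v n = 0 -> forall i, (i < n.+1)%N -> v i = 0.
    move=> vn i; rewrite ltnS leq_eqVlt => /orP[/eqP -> //|].
    apply: (cauchy_kernel_progression_eq0 (ltr0Sn R 1)) => j jn.
    by have := v_sum j jn; rewrite big_ord_recr /= vn mul0r addr0.
  have := u0 n (ltnSn n); rewrite /u.
  case: top => [/leq_sizeP/(_ n (leqnn n)) An|/leq_sizeP/(_ n (leqnn n)) Bn|top].
  - by rewrite An mulr0 addr0 => un; apply: vn0; rewrite /v An mulr0 subr0.
  - by rewrite Bn add0r => un; apply: vn0; rewrite /v Bn un subrr.
  - move=> _; apply: (cauchy_kernel_progression_eq0 (ltr0Sn R 1)) => j.
    rewrite ltnS leq_eqVlt => /orP[/eqP -> |/v_sum //].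
    by rewrite -(momentQ_odd _ sA sB).
have AB0 i : (i < n.+1)%N -> A`_i = 0 /\ B`_i = 0.
  move=> i_n; have := u0 i i_n; have := v0 i i_n; rewrite /u /v => vi ui.
  have Bi : B`_i = 0 by lra.
  by split=> //; move/eqP: ui; rewrite Bi add0r mulf_eq0 signr_eq0 => /eqP.
split; apply/polyP => i; rewrite coef0; have [i_n|n_i] := ltnP i n.+1.
- by case: (AB0 i i_n).
- by move/leq_sizeP: sA; apply.
- by case: (AB0 i i_n).
- by move/leq_sizeP: sB; apply.
Qed.

Lemma typeI_uniq n m A B A' B' : (m <= n.+1)%N -> (n <= m.+1)%N ->
  typeI n m A B -> typeI n m A' B' -> A = A' /\ B = B'.
Proof.
move=> mn nm [sA sB mom0 mom1] [sA' sB' mom0' mom1'].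
suff [/eqP + /eqP] : A - A' = 0 /\ B - B' = 0 by rewrite !subr_eq0 => /eqP-> /eqP->.
have {mom0 mom1 mom0' mom1'} dmom k :
    (k <= (n + m).-1)%N -> momentQ (A - A') (B - B') k = 0.
  have [sAm sAm'] := (leq_trans sA (leq_maxl n m), leq_trans sA' (leq_maxl n m)).
  have [sBm sBm'] := (leq_trans sB (leq_maxr n m), leq_trans sB' (leq_maxr n m)).
  rewrite (momentQB _ sAm sBm sAm' sBm').
  rewrite leq_eqVlt => /orP[/eqP -> | k_lt]; first by rewrite mom1 mom1' subrr.
  by rewrite mom0 ?mom0' ?subrr //; lia.
case: (ltngtP n m) => [n_lt_m | m_lt_n | n_eq_m].
- have {n_lt_m mn nm} m_def : m = n.+1 by lia.
  subst m; have sD := size_polyB_leq sA sA'.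
  apply: (momentQ_eq0_poly_eq0 (leq_trans sD (leqnSn _)) (size_polyB_leq sB sB') _
                               (Or31 _ _ sD)).
  by move=> k k_le; apply: dmom; lia.
- have {m_lt_n mn nm} n_def : n = m.+1 by lia.
  subst n; have sD := size_polyB_leq sB sB'.
  apply: (momentQ_eq0_poly_eq0 (size_polyB_leq sA sA') (leq_trans sD (leqnSn _)) _
                               (Or32 _ _ sD)).
  by move=> k k_le; apply: dmom; lia.
- subst m; case: n {mn nm} sA sB sA' sB' dmom => [|N] sA sB sA' sB' dmom.
    by split; apply/size_poly_leq0P; apply: size_polyB_leq.
  apply: (momentQ_eq0_poly_eq0 (size_polyB_leq sA sA') (size_polyB_leq sB sB')).
    by move=> k k_le; apply: dmom; lia.
  by apply/Or33/dmom; lia.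
Qed.

Lemma typeI_iff n m A0 B0 : (m <= n.+1)%N -> (n <= m.+1)%N ->
  typeI n m A0 B0 -> forall A B, typeI n m A B <-> B = B0 /\ A = A0.
Proof.
move=> mn nm T0 A B; split=> [T | [-> ->] //].
by have [-> ->] := typeI_uniq mn nm T T0.
Qed.

Definition pqcoef n e i : R := 'C(n, i)%:R * gbinom n ((i%:R - e) / 2) * (-1) ^+ (n - i).

Lemma coef_pP n i : (pP R n)`_i = pqcoef n 0 i.
Proof.
rewrite /pP -(poly_def _ (fun k => 'C(n, k)%:R * gbinom n (k%:R / 2) * (-1) ^+ (n - k))).
rewrite coef_poly /pqcoef subr0.
by case: ltnP => // n_i; rewrite bin_small // !mul0r.
Qed.

Lemma coef_qP n i : (qP R n)`_i = pqcoef n 1 i.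
Proof.
rewrite /qP -(poly_def _ (pqcoef n 1)) coef_poly.
by case: ltnP => // n_i; rewrite /pqcoef bin_small // !mul0r.
Qed.

Lemma size_pP n : (size (pP R n) <= n.+1)%N.
Proof. by apply/leq_sizeP => i n_i; rewrite coef_pP /pqcoef bin_small // !mul0r. Qed.

Lemma size_qP n : (size (qP R n) <= n.+1)%N.
Proof. by apply/leq_sizeP => i n_i; rewrite coef_qP /pqcoef bin_small // !mul0r. Qed.

Definition gbinomP n e : {poly R} := \prod_(l < n) ('X + (2 * l.+1%:R - e)%:P).

Lemma gbinomE n e x : gbinom n ((x - e) / 2) = (gbinomP n e).[x] / (2 ^+ n * n`!%:R).
Proof.
rewrite /gbinom /poch /gbinomP horner_prod invfM mulrA; congr (_ / _).
have -> : (2 : R) ^+ n = \prod_(l < n) 2 by rewrite prodr_const card_ord.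
rewrite -prodf_div; apply: eq_bigr => l _.
by rewrite hornerD hornerX hornerC -natr1; field.
Qed.

Definition pqmoment n e a : R := \sum_(i < n.+1) pqcoef n e i / (i%:R + a).

Lemma pqmomentE n e a : 0 < a ->
  pqmoment n e a = (-1) ^+ n * (gbinomP n e).[- a] / (2 ^+ n * poch a n.+1).
Proof.
move=> a0; have Ga : size (gbinomP n e) = n.+1 by rewrite size_prod_XaddC card_ord.
transitivity ((-1) ^+ n / (2 ^+ n * n`!%:R) *
              fdiff n (fun k => (gbinomP n e).[k%:R] / (k%:R + a))).
  rewrite /fdiff mulr_sumr; apply: eq_bigr => i _.
  have i_n : (i <= n)%N by rewrite -ltnS.
  by rewrite /pqcoef gbinomE (exprB i_n (unitrN1 R)) invr_sign; ring.
rewrite fdiff_frac ?Ga //; field.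
by rewrite natr_fact_neq0 !lt0r_neq0 ?poch_gt0 ?exprn_gt0.
Qed.

Lemma gbinomP_root n e j : (j < n)%N -> (gbinomP n e).[- (2 * j%:R + 2 - e)] = 0.
Proof.
move=> jn; rewrite /gbinomP horner_prod (bigD1 (Ordinal jn)) //=.
by rewrite hornerD hornerX hornerC -natr1 (_ : _ + _ = 0) ?mul0r //; ring.
Qed.

Lemma prod_ord_natrB n : \prod_(l < n) (l%:R - n%:R) = (-1) ^+ n * n`!%:R :> R.
Proof.
elim: n => [|n IHn]; first by rewrite big_ord0 mul1r.
rewrite big_ord_recl factS natrM exprS.
under eq_bigr do rewrite lift0 -natr1 -nat1r addrKA.
by rewrite IHn -natr1 sub0r; ring.
Qed.

Lemma gbinomP_top n e : (gbinomP n e).[- (2 * n%:R + 2 - e)] = (-1) ^+ n * (2 ^+ n * n`!%:R).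
Proof.
rewrite /gbinomP horner_prod mulrCA -prod_ord_natrB.
have -> : (2 : R) ^+ n = \prod_(l < n) 2 by rewrite prodr_const card_ord.
rewrite -big_split /=; apply: eq_bigr => l _.
by rewrite hornerD hornerX hornerC -natr1; ring.
Qed.

Lemma pqmoment_root n e j : e < 2 -> (j < n)%N -> pqmoment n e (2 * j%:R + 2 - e) = 0.
Proof.
move=> e2 jn; rewrite pqmomentE ?gbinomP_root ?mulr0 ?mul0r //.
by have := ler0n R j; lra.
Qed.

Lemma pqmoment_top n e : e < 2 ->
  pqmoment n e (2 * n%:R + 2 - e) = n`!%:R / poch (2 * n%:R + 2 - e) n.+1.
Proof.
move=> e2; have a0 : 0 < 2 * n%:R + 2 - e by have := ler0n R n; lra.
rewrite pqmomentE // gbinomP_top signrMK.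
by field; rewrite !lt0r_neq0 ?poch_gt0 ?exprn_gt0.
Qed.

(** * Existence *)

Section MomentsOfPQ.
Variables (n : nat) (A B : {poly R}) (alpha beta : R).
Hypotheses (sA : (size A <= n.+1)%N) (sB : (size B <= n.+1)%N).
Hypothesis even_part : forall i, B`_i + (-1) ^+ i * A`_i = alpha * pqcoef n 1 i.
Hypothesis odd_part : forall i, B`_i - (-1) ^+ i * A`_i = beta * pqcoef n 0 i.

Lemma momentQ_pq_even j : momentQ A B (2 * j)%N = alpha * pqmoment n 1 (2 * j%:R + 2 - 1).
Proof.
rewrite (momentQ_even _ sA sB) /pqmoment mulr_sumr; apply: eq_bigr => i _.
by rewrite even_part (_ : 2 * j%:R + 2 - 1 = 2 * j%:R + 1) ?mulrA //; ring.
Qed.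

Lemma momentQ_pq_odd j : momentQ A B (2 * j)%N.+1 = beta * pqmoment n 0 (2 * j%:R + 2 - 0).
Proof.
rewrite (momentQ_odd _ sA sB) /pqmoment mulr_sumr subr0; apply: eq_bigr => i _.
by rewrite odd_part mulrA.
Qed.

Lemma momentQ_pq_lt k : (k < 2 * n)%N -> momentQ A B k = 0.
Proof.
rewrite -[k]odd_double_half -mul2n; case: (odd k) => /= k_lt.
  by rewrite momentQ_pq_odd pqmoment_root ?mulr0 //; lia.
by rewrite add0n momentQ_pq_even pqmoment_root ?mulr0 ?ltr1n //; lia.
Qed.

Lemma momentQ_pq_top_even :
  momentQ A B (2 * n)%N = alpha * ((n`! * (2 * n)`!)%N%:R / (3 * n + 1)%N`!%:R).
Proof.
rewrite momentQ_pq_even pqmoment_top ?ltr1n //.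
rewrite (_ : 2 * n%:R + 2 - 1 = (2 * n)%N.+1%:R :> R); last first.
  by rewrite -[(2 * n).+1%:R]natr1 natrM; ring.
rewrite poch_nat (_ : 2 * n + n.+1 = 3 * n + 1)%N ?natrM; last lia.
by field; rewrite !natr_fact_neq0.
Qed.

Lemma momentQ_pq_top_odd :
  momentQ A B (2 * n)%N.+1 = beta * ((n`! * (2 * n + 1)`!)%N%:R / (3 * n + 2)%N`!%:R).
Proof.
rewrite momentQ_pq_odd pqmoment_top // subr0.
rewrite (_ : 2 * n%:R + 2 = (2 * n + 1)%N.+1%:R :> R); last first.
  by rewrite -[(2 * n + 1).+1%:R]natr1 natrD natrM; ring.
rewrite poch_nat (_ : 2 * n + 1 + n.+1 = 3 * n + 2)%N ?natrM; last lia.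
by field; rewrite !natr_fact_neq0.
Qed.

End MomentsOfPQ.

Definition diag_scale n : R :=
  2^-1 * ((3 * n + 2)`!)%:R / ((n`!)%:R * ((2 * n + 1)`!)%:R).

Lemma typeI_diag n :
  typeI n.+1 n.+1 (- ((diag_scale n *: pP R n) \Po (- 'X))) (diag_scale n *: pP R n).
Proof.
set B0 := diag_scale n *: pP R n; set A0 := - (B0 \Po - 'X).
have sB : (size B0 <= n.+1)%N := leq_trans (size_scale_leq _ _) (size_pP n).
have sA : (size A0 <= n.+1)%N by rewrite size_polyN size_comp_polyXN.
have coefA i : A0`_i = - ((-1) ^+ i * B0`_i) by rewrite coefN coef_comp_polyXN.
have ev i : B0`_i + (-1) ^+ i * A0`_i = 0 * pqcoef n 1 i.
  by rewrite coefA mulrN signrMK subrr mul0r.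
have od i : B0`_i - (-1) ^+ i * A0`_i = (2 * diag_scale n) * pqcoef n 0 i.
  by rewrite coefA mulrN signrMK opprK coefZ coef_pP; ring.
split=> // [k k_lt|].
  have : (k <= 2 * n)%N by lia.
  rewrite leq_eqVlt => /orP[/eqP -> | ]; last exact: (momentQ_pq_lt sA sB ev od).
  by rewrite (momentQ_pq_top_even sA sB ev) mul0r.
rewrite (_ : (n.+1 + n.+1).-1 = (2 * n).+1)%N; last lia.
rewrite (momentQ_pq_top_odd sA sB od) /diag_scale natrM.
by field; rewrite !natr_fact_neq0.
Qed.

Definition offdiag_scale n : R :=
  2 * poch (n%:R / 2 + 1) n * ((2 * n)`!)%:R / ((3 * n + 1)`!)%:R.

Definition pq_minus n : {poly R} :=
  gbinom n (n%:R / 2) *: qP R n - gbinom n ((n%:R - 1) / 2) *: pP R n.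

Definition pq_plus n : {poly R} :=
  gbinom n (n%:R / 2) *: qP R n + gbinom n ((n%:R - 1) / 2) *: pP R n.

Lemma offdiag_scale_neq0 n : offdiag_scale n != 0.
Proof.
rewrite /offdiag_scale !mulf_neq0 ?invr_eq0 ?natr_fact_neq0 ?pnatr_eq0 //.
by rewrite lt0r_neq0 // poch_gt0 // ltr_wpDl // divr_ge0.
Qed.

Lemma size_pq_minus n : (size (pq_minus n) <= n)%N.
Proof.
apply/leq_sizeP => i; rewrite leq_eqVlt coefB !coefZ coef_pP coef_qP /pqcoef.
case/orP => [/eqP <- | n_i]; last by rewrite bin_small // !mul0r !mulr0 subrr.
by rewrite subr0 subnn; ring.
Qed.

Lemma size_pq_plus n : (size (pq_plus n) <= n.+1)%N.
Proof.
rewrite (leq_trans (size_polyD _ _)) // geq_max.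
by rewrite !(leq_trans (size_scale_leq _ _)) ?size_pP ?size_qP.
Qed.

Lemma momentQ_offdiag n A B beta : (size A <= n.+1)%N -> (size B <= n.+1)%N ->
  (forall i, B`_i + (-1) ^+ i * A`_i
     = 2 * gbinom n (n%:R / 2) / offdiag_scale n * pqcoef n 1 i) ->
  (forall i, B`_i - (-1) ^+ i * A`_i = beta * pqcoef n 0 i) ->
  (forall k, (k < 2 * n)%N -> momentQ A B k = 0) /\ momentQ A B (2 * n)%N = 1.
Proof.
move=> sA sB ev od; split; first exact: (momentQ_pq_lt sA sB ev od).
rewrite (momentQ_pq_top_even sA sB ev) /gbinom /offdiag_scale natrM.
by field; rewrite !natr_fact_neq0 lt0r_neq0 // poch_gt0 // ltr_wpDl // divr_ge0.
Qed.

Lemma typeI_Sn_n n :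
  typeI n.+1 n ((offdiag_scale n)^-1 *: (pq_plus n \Po - 'X))
               ((offdiag_scale n)^-1 *: pq_minus n).
Proof.
set b := offdiag_scale n; set A0 := b^-1 *: _; set B0 := b^-1 *: _.
have sB : (size B0 <= n)%N := leq_trans (size_scale_leq _ _) (size_pq_minus n).
have sA : (size A0 <= n.+1)%N.
  by rewrite (leq_trans (size_scale_leq _ _)) // size_comp_polyXN size_pq_plus.
have ev i : B0`_i + (-1) ^+ i * A0`_i = 2 * gbinom n (n%:R / 2) / b * pqcoef n 1 i.
  rewrite !coefZ coef_comp_polyXN mulrCA signrMK coefB coefD !coefZ coef_pP coef_qP; ring.
have od i : B0`_i - (-1) ^+ i * A0`_i = - 2 * gbinom n ((n%:R - 1) / 2) / b * pqcoef n 0 i.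
  rewrite !coefZ coef_comp_polyXN mulrCA signrMK coefB coefD !coefZ coef_pP coef_qP; ring.
have [mom0 mom1] := momentQ_offdiag sA (leq_trans sB (leqnSn n)) ev od.
split=> // [k k_lt|]; first by apply: mom0; lia.
by rewrite (_ : (n.+1 + n).-1 = 2 * n)%N //; lia.
Qed.

Lemma typeI_n_Sn n :
  typeI n n.+1 ((offdiag_scale n)^-1 *: (pq_minus n \Po - 'X))
               ((offdiag_scale n)^-1 *: pq_plus n).
Proof.
set b := offdiag_scale n; set A0 := b^-1 *: _; set B0 := b^-1 *: _.
have sA : (size A0 <= n)%N.
  by rewrite (leq_trans (size_scale_leq _ _)) // size_comp_polyXN size_pq_minus.
have sB : (size B0 <= n.+1)%N := leq_trans (size_scale_leq _ _) (size_pq_plus n).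
have ev i : B0`_i + (-1) ^+ i * A0`_i = 2 * gbinom n (n%:R / 2) / b * pqcoef n 1 i.
  rewrite !coefZ coef_comp_polyXN mulrCA signrMK coefB coefD !coefZ coef_pP coef_qP; ring.
have od i : B0`_i - (-1) ^+ i * A0`_i = 2 * gbinom n ((n%:R - 1) / 2) / b * pqcoef n 0 i.
  rewrite !coefZ coef_comp_polyXN mulrCA signrMK coefB coefD !coefZ coef_pP coef_qP; ring.
have [mom0 mom1] := momentQ_offdiag (leq_trans sA (leqnSn n)) sB ev od.
split=> // [k k_lt|]; first by apply: mom0; lia.
by rewrite (_ : (n + n.+1).-1 = 2 * n)%N //; lia.
Qed.

End LegendreAngelesco.

Theorem mainTheorem5 (R : realFieldType) :
  (forall (n : nat) (A B : {poly R}),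
     typeI n.+1 n.+1 A B <->
     (let c : R := 2^-1 * ((3 * n + 2)`!)%:R / ((n`!)%:R * ((2 * n + 1)`!)%:R) in
      B = c *: pP R n /\ A = - ((c *: pP R n) \Po (- 'X))))
  /\
  (forall n : nat, (1 <= n)%N ->
     let b : R := 2 * poch (n%:R / 2 + 1) n * ((2 * n)`!)%:R / ((3 * n + 1)`!)%:R in
     let X1 : {poly R} := gbinom n (n%:R / 2) *: qP R n - gbinom n ((n%:R - 1) / 2) *: pP R n in
     let X2 : {poly R} := gbinom n (n%:R / 2) *: qP R n + gbinom n ((n%:R - 1) / 2) *: pP R n in
     (forall A B : {poly R},
        typeI n.+1 n A B <-> (b *: B = X1 /\ b *: A = X2 \Po (- 'X)))
     /\
     (forall A B : {poly R},
        typeI n n.+1 A B <-> (b *: B = X2 /\ b *: A = X1 \Po (- 'X)))).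
Proof.
split=> [n A B | n _ b X1 X2].
  exact: typeI_iff (leqnSn _) (leqnSn _) (typeI_diag R n) A B.
have scaleE (P Q : {poly R}) : P = b^-1 *: Q <-> b *: P = Q.
  by have b0 := offdiag_scale_neq0 R n; split=> [->|<-]; rewrite ?scalerKV ?scalerK.
split=> A B.
  by rewrite (typeI_iff (leqW (leqnSn n)) (leqnn _) (typeI_Sn_n R n)) !scaleE.
by rewrite (typeI_iff (leqnn _) (leqW (leqnSn n)) (typeI_n_Sn R n)) !scaleE.
Qed.
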